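(* Let $\Gamma$ be a connected connected-homogeneous locally-finite bipartite graph with bipartition $X\cup Y$. Let $x\in X$ and $y\in Y$ be adjacent, and define $A=\Gamma(x)\setminus\{y\}$ and $B=\Gamma(y)\setminus\{x\}$. Then $\Omega=\langle A\cup B\rangle$ (with bipartition $A\cup B$) is a finite homogeneous bipartite graph, and therefore is one of: a null bipartite graph, a complete bipartite graph, the complement of a perfect matching, or a perfect matching.
   Context: $\Gamma(v)$ denotes the set of neighbours of $v$ and $\langle S\rangle$ the induced subgraph on $S$. A bipartite graph with given bipartition $X\cup Y$ is a homogeneous bipartite graph if every isomorphism between finite induced subgraphs mapping vertices of $X$ to vertices of $X$ and vertices of $Y$ to vertices of $Y$ extends to an automorphism preserving $X$ and $Y$ setwise; it is a connected-homogeneous bipartite graph if this holds for isomorphisms between finite connected induced subgraphs. A null bipartite graph has no edges. The complement of a perfect matching on $2n$ vertices has parts $X',Y'$ of size $n$, a bijection $\eta:X'\to Y'$, and $x'\sim y'$ iff $y'\ne\eta(x')$. *)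

From Stdlib Require Import List Relations.
Import ListNotations.

Section Graphs.
Context {V : Type} (adj : V -> V -> Prop).

Definition is_bipartite (X Y : V -> Prop) : Prop :=
  (forall u v, adj u v -> adj v u) /\
  (forall u, ~ adj u u) /\
  (forall u, X u \/ Y u) /\
  (forall u, ~ (X u /\ Y u)) /\
  (forall u v, adj u v -> (X u /\ Y v) \/ (Y u /\ X v)).

Definition connected_graph : Prop :=
  forall u v, clos_refl_trans V adj u v.

Definition locally_finite : Prop :=
  forall v, exists l : list V, forall w, adj v w -> In w l.

Definition connected_in (S : list V) : Prop :=
  forall u v, In u S -> In v S ->
    clos_refl_trans V (fun a b => adj a b /\ In a S /\ In b S) u v.

Definition bip_partial_iso (X Y : V -> Prop) (S : list V) (f : V -> V) : Prop :=
  (forall u v, In u S -> In v S -> f u = f v -> u = v) /\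
  (forall u v, In u S -> In v S -> (adj u v <-> adj (f u) (f v))) /\
  (forall u, In u S -> (X u <-> X (f u)) /\ (Y u <-> Y (f u))).

Definition bip_automorphism (X Y : V -> Prop) (g : V -> V) : Prop :=
  (exists h : V -> V, (forall u, h (g u) = u) /\ (forall u, g (h u) = u)) /\
  (forall u v, adj u v <-> adj (g u) (g v)) /\
  (forall u, (X u <-> X (g u)) /\ (Y u <-> Y (g u))).

Definition extends_to_aut (X Y : V -> Prop) (S : list V) (f : V -> V) : Prop :=
  exists g, bip_automorphism X Y g /\ (forall u, In u S -> g u = f u).

Definition homogeneous_bipartite (X Y : V -> Prop) : Prop :=
  is_bipartite X Y /\
  forall (S : list V) (f : V -> V),
    bip_partial_iso X Y S f -> extends_to_aut X Y S f.

Definition conn_homogeneous_bipartite (X Y : V -> Prop) : Prop :=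
  is_bipartite X Y /\
  forall (S : list V) (f : V -> V),
    connected_in S -> connected_in (map f S) ->
    bip_partial_iso X Y S f -> extends_to_aut X Y S f.

Definition null_bipartite : Prop := forall u v, ~ adj u v.

Definition complete_bipartite (X Y : V -> Prop) : Prop :=
  forall u v, X u -> Y v -> adj u v.

Definition bij_between (X Y : V -> Prop) (eta : V -> V) : Prop :=
  (forall u, X u -> Y (eta u)) /\
  (forall u v, X u -> X v -> eta u = eta v -> u = v) /\
  (forall w, Y w -> exists u, X u /\ eta u = w).

Definition perfect_matching (X Y : V -> Prop) : Prop :=
  exists eta, bij_between X Y eta /\
    forall u v, X u -> Y v -> (adj u v <-> v = eta u).

Definition compl_perfect_matching (X Y : V -> Prop) : Prop :=
  exists eta, bij_between X Y eta /\
    forall u v, X u -> Y v -> (adj u v <-> v <> eta u).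

End Graphs.

Definition finite_type (T : Type) : Prop := exists l : list T, forall t, In t l.

Definition induced {V : Type} (adj : V -> V -> Prop) (P : V -> Prop)
  : {v : V | P v} -> {v : V | P v} -> Prop :=
  fun a b => adj (proj1_sig a) (proj1_sig b).

Definition lift_pred {V : Type} (P Q : V -> Prop) : {v : V | P v} -> Prop :=
  fun a => Q (proj1_sig a).

From Stdlib Require Import List Relations Classical ClassicalEpsilon ProofIrrelevance FinFun.
Import ListNotations.

(* Ω is finite because x and y have finitely many neighbours.  Every vertex of Ω is adjacent
   to x or to y, so a partial isomorphism of Ω, extended by fixing x and y, is a partial
   isomorphism between connected induced subgraphs of Γ; its extension to Γ fixes x and y,
   hence preserves A and B and restricts to an automorphism of Ω.

   For the classification of a finite homogeneous bipartite graph P ∪ Q: every permutation of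
   P extends to an automorphism, so the neighbourhoods of the Q-vertices form a family of
   subsets of P closed under permutations of P.  Two Q-vertices with the same neighbourhood
   force the graph to be null or complete.  Otherwise Q-vertices are determined by their
   neighbourhoods, and a neighbourhood that contains two points and misses two has more than
   |P| images, giving |Q| > |P|; by symmetry this cannot happen on both sides, and in the
   remaining cases every vertex has one neighbour or one non-neighbour. *)

Definition dec (P : Prop) : {P} + {~ P} := excluded_middle_informative P.

Lemma sig_eq {V : Type} (W : V -> Prop) (s t : {v | W v}) :
  proj1_sig s = proj1_sig t -> s = t.
Proof. destruct s, t; simpl; intros ->; apply subset_eq_compat; reflexivity. Qed.

Definition sig_extend {V : Type} (W : V -> Prop) (f : {v | W v} -> {v | W v}) (v : V) : V :=
  match dec (W v) with left p => proj1_sig (f (exist W v p)) | right _ => v end.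

Lemma sig_extend_val {V : Type} (W : V -> Prop) f (s : {v | W v}) :
  sig_extend W f (proj1_sig s) = proj1_sig (f s).
Proof.
  destruct s as [v p]; unfold sig_extend; simpl.
  destruct (dec (W v)) as [q|]; [|contradiction].
  do 2 f_equal; now apply sig_eq.
Qed.

Lemma sig_extend_out {V : Type} (W : V -> Prop) f v : ~ W v -> sig_extend W f v = v.
Proof. intros n; unfold sig_extend; destruct (dec (W v)); tauto. Qed.

Lemma finite_sig {V : Type} (W : V -> Prop) (l : list V) :
  (forall v, W v -> In v l) -> finite_type {v | W v}.
Proof.
  intros Hl.
  exists (flat_map (fun v => match dec (W v) with
                             | left p => [exist W v p] | right _ => [] end) l).
  intros [v p]; apply in_flat_map; exists v; split; [now apply Hl|].
  destruct (dec (W v)) as [q|]; [left; now apply sig_eq|contradiction].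
Qed.

Lemma finite_inj_surj {T : Type} (P : T -> Prop) (F : T -> T) :
  finite_type T ->
  (forall p, P p -> P (F p)) ->
  (forall p p', P p -> P p' -> F p = F p' -> p = p') ->
  forall q, P q -> exists p, P p /\ F p = q.
Proof.
  intros [l Hl] HP Hinj q Pq.
  destruct (finite_sig P l (fun v _ => Hl v)) as [l' Hl'].
  set (G := fun s : {v | P v} => exist P (F (proj1_sig s)) (HP _ (proj2_sig s))).
  assert (HG : Injective G).
  { intros [a pa] [b pb] E; apply sig_eq; apply (f_equal (@proj1_sig _ _)) in E.
    exact (Hinj a b pa pb E). }
  apply (Endo_Injective_Surjective (ex_intro _ l' Hl') (fun a b => classic (a = b))) in HG.
  destruct (HG (exist P q Pq)) as [[p Pp] E].
  exists p; split; [exact Pp|exact (f_equal (@proj1_sig _ _) E)].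
Qed.

Definition swap {T : Type} (a b z : T) : T :=
  if dec (z = a) then b else if dec (z = b) then a else z.

Section Swap.
Context {T : Type} (a b : T).

Lemma swap_l : swap a b a = b.
Proof. unfold swap; destruct (dec (a = a)); congruence. Qed.

Lemma swap_r : swap a b b = a.
Proof. unfold swap; destruct (dec (b = a)); destruct (dec (b = b)); congruence. Qed.

Lemma swap_other z : z <> a -> z <> b -> swap a b z = z.
Proof. unfold swap; destruct (dec (z = a)); destruct (dec (z = b)); congruence. Qed.

Lemma swap_involutive z : swap a b (swap a b z) = z.
Proof.
  destruct (dec (z = a)) as [->|na]; [now rewrite swap_l, swap_r|].
  destruct (dec (z = b)) as [->|nb]; [now rewrite swap_r, swap_l|].
  now rewrite (swap_other z na nb), (swap_other z na nb).
Qed.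

Lemma swap_pred (R : T -> Prop) z : R a -> R b -> R z -> R (swap a b z).
Proof. unfold swap; destruct (dec (z = a)); destruct (dec (z = b)); auto. Qed.

End Swap.

Lemma involutive_inj {T : Type} (s : T -> T) :
  (forall z, s (s z) = z) -> forall u v, s u = s v -> u = v.
Proof. intros H u v E; now rewrite <- (H u), <- (H v), E. Qed.

Definition partial_isos_extend {T : Type} (adj : T -> T -> Prop) (P Q : T -> Prop) : Prop :=
  forall S f, bip_partial_iso adj P Q S f -> extends_to_aut adj P Q S f.

Definition twin_free {T : Type} (adj : T -> T -> Prop) (P Q : T -> Prop) : Prop :=
  forall u v, P u -> P v -> (forall w, Q w -> (adj u w <-> adj v w)) -> u = v.

Definition two_neighbours {T : Type} (adj : T -> T -> Prop) (u : T) : Prop :=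
  exists a b, a <> b /\ adj u a /\ adj u b.

Definition two_non_neighbours {T : Type} (adj : T -> T -> Prop) (R : T -> Prop) (u : T) : Prop :=
  exists a b, R a /\ R b /\ a <> b /\ ~ adj u a /\ ~ adj u b.

Lemma is_bipartite_swap {T : Type} (adj : T -> T -> Prop) P Q :
  is_bipartite adj P Q -> is_bipartite adj Q P.
Proof.
  intros (Hs & Hi & Hc & Hd & He); repeat split; auto.
  - intro u; destruct (Hc u); auto.
  - intros u [? ?]; apply (Hd u); auto.
  - intros u v a; destruct (He u v a); tauto.
Qed.

Lemma bip_automorphism_swap {T : Type} (adj : T -> T -> Prop) P Q g :
  bip_automorphism adj P Q g -> bip_automorphism adj Q P g.
Proof. intros (Hb & Ha & Hs); split; [|split]; auto; intro u; split; apply Hs. Qed.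

Lemma partial_isos_extend_swap {T : Type} (adj : T -> T -> Prop) P Q :
  partial_isos_extend adj P Q -> partial_isos_extend adj Q P.
Proof.
  intros H S f (Hi & Ha & Hs).
  destruct (H S f) as [g [Hg E]]; [split; [|split]; auto; intros u iu; split; apply Hs; auto|].
  exists g; split; auto; now apply bip_automorphism_swap.
Qed.

Lemma twins_of_unique_neighbour {T : Type} (adj : T -> T -> Prop) p u v :
  adj u p -> adj v p -> ~ two_neighbours adj u -> ~ two_neighbours adj v ->
  forall a, adj u a <-> adj v a.
Proof.
  intros up vp nu nv a; split; intro h;
    destruct (classic (a = p)) as [->|n]; auto; exfalso;
    [apply nu | apply nv]; exists a, p; auto.
Qed.

Lemma twins_of_unique_non_neighbour {T : Type} (adj : T -> T -> Prop) (R : T -> Prop) p u v :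
  R p -> ~ adj u p -> ~ adj v p ->
  ~ two_non_neighbours adj R u -> ~ two_non_neighbours adj R v ->
  forall a, R a -> (adj u a <-> adj v a).
Proof.
  intros Rp up vp nu nv a Ra; split; intro h; apply NNPP; intro h';
    destruct (classic (a = p)) as [->|n]; try contradiction;
    [apply nv | apply nu]; exists a, p; auto.
Qed.

Section Bipartite.
Context {T : Type} (adj : T -> T -> Prop) (P Q : T -> Prop).
Hypothesis Hbip : is_bipartite adj P Q.

Lemma bip_sym u v : adj u v -> adj v u.
Proof. destruct Hbip as (H & _); apply H. Qed.

Lemma bip_irrefl u : ~ adj u u.
Proof. destruct Hbip as (_ & H & _); apply H. Qed.

Lemma bip_cover u : P u \/ Q u.
Proof. destruct Hbip as (_ & _ & H & _); apply H. Qed.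

Lemma bip_disjoint u : P u -> Q u -> False.
Proof. destruct Hbip as (_ & _ & _ & H & _); intros; apply (H u); auto. Qed.

Lemma bip_adj_P u v : P u -> adj u v -> Q v.
Proof.
  destruct Hbip as (_ & _ & _ & _ & H); intros Pu a.
  destruct (H u v a) as [[_ ?]|[? _]]; auto; exfalso; now apply (bip_disjoint u).
Qed.

Lemma bip_adj_Q u v : Q u -> adj u v -> P v.
Proof.
  destruct Hbip as (_ & _ & _ & _ & H); intros Qu a.
  destruct (H u v a) as [[? _]|[_ ?]]; auto; exfalso; now apply (bip_disjoint u).
Qed.

Lemma bip_no_edge_P u v : P u -> P v -> ~ adj u v.
Proof. intros Pu Pv a; exact (bip_disjoint v Pv (bip_adj_P u v Pu a)). Qed.

Lemma some_edge : ~ null_bipartite adj -> exists p q, P p /\ Q q /\ adj p q.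
Proof.
  intros Hn; apply NNPP; intro H; apply Hn; intros u v a.
  destruct (bip_cover u) as [Pu|Qu].
  - apply H; exists u, v; eauto using bip_adj_P.
  - apply H; exists v, u; eauto using bip_adj_Q, bip_sym.
Qed.

Lemma some_non_edge : ~ complete_bipartite adj P Q -> exists p q, P p /\ Q q /\ ~ adj p q.
Proof.
  intros Hc; apply NNPP; intro H; apply Hc; intros u v Pu Qv.
  apply NNPP; intro n; apply H; eauto.
Qed.

Lemma perfect_matching_of_unique_neighbours :
  (forall p, P p -> exists q, adj p q) ->
  (forall p, P p -> ~ two_neighbours adj p) ->
  (forall q, Q q -> exists p, adj q p) ->
  twin_free adj P Q -> perfect_matching adj P Q.
Proof.
  intros nbP no2 nbQ tw.
  set (eta := fun p => epsilon (inhabits p) (fun q => adj p q)).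
  assert (Heta : forall p, P p -> adj p (eta p)) by (intros; now apply epsilon_spec, nbP).
  assert (Huniq : forall p q, P p -> adj p q -> q = eta p).
  { intros p q Pp a; apply NNPP; intro ne; apply (no2 p Pp); exists q, (eta p); auto. }
  exists eta; split; [split; [|split]|].
  - intros p Pp; exact (bip_adj_P p _ Pp (Heta p Pp)).
  - intros u v Pu Pv E; apply tw; auto; intros w _; split; intro a.
    + now rewrite (Huniq u w Pu a), E; apply Heta.
    + now rewrite (Huniq v w Pv a), <- E; apply Heta.
  - intros w Qw; destruct (nbQ w Qw) as [p a].
    assert (Pp : P p) by exact (bip_adj_Q w p Qw a).
    exists p; split; auto; symmetry; apply Huniq, bip_sym; auto.
  - intros u v Pu _; split; [apply Huniq; auto|intros ->; auto].
Qed.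

Lemma compl_perfect_matching_of_unique_non_neighbours :
  (forall p, P p -> exists q, Q q /\ ~ adj p q) ->
  (forall p, P p -> ~ two_non_neighbours adj Q p) ->
  (forall q, Q q -> exists p, P p /\ ~ adj q p) ->
  twin_free adj P Q -> compl_perfect_matching adj P Q.
Proof.
  intros nnP no2 nnQ tw.
  set (eta := fun p => epsilon (inhabits p) (fun q => Q q /\ ~ adj p q)).
  assert (Heta : forall p, P p -> Q (eta p) /\ ~ adj p (eta p))
    by (intros; now apply epsilon_spec, nnP).
  assert (Huniq : forall p q, P p -> Q q -> ~ adj p q -> q = eta p).
  { intros p q Pp Qq a; apply NNPP; intro ne; apply (no2 p Pp).
    exists q, (eta p); repeat split; auto; apply Heta; auto. }
  assert (Hiff : forall u v, P u -> Q v -> (adj u v <-> v <> eta u)).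
  { intros u v Pu Qv; split.
    - intros a ->; now apply (Heta u Pu).
    - intros ne; apply NNPP; intro na; apply ne; apply Huniq; auto. }
  exists eta; split; [split; [|split]|]; auto.
  - intros p Pp; apply Heta; auto.
  - intros u v Pu Pv E; apply tw; auto; intros w Qw.
    rewrite (Hiff u w Pu Qw), (Hiff v w Pv Qw), E; reflexivity.
  - intros w Qw; destruct (nnQ w Qw) as [p [Pp a]].
    exists p; split; auto; symmetry; apply Huniq; auto; intro h; apply a, bip_sym, h.
Qed.

End Bipartite.

Section Automorphism.
Context {T : Type} (adj : T -> T -> Prop) (P Q : T -> Prop) (g : T -> T).
Hypothesis Hg : bip_automorphism adj P Q g.

Lemma aut_adj u v : adj u v <-> adj (g u) (g v).
Proof. destruct Hg as (_ & H & _); apply H. Qed.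

Lemma aut_P u : P u <-> P (g u).
Proof. destruct Hg as (_ & _ & H); apply H. Qed.

Lemma aut_Q u : Q u <-> Q (g u).
Proof. destruct Hg as (_ & _ & H); apply H. Qed.

Lemma aut_inj u v : g u = g v -> u = v.
Proof. destruct Hg as ([h [H _]] & _); intros E; now rewrite <- (H u), <- (H v), E. Qed.

Lemma aut_surj v : exists u, g u = v.
Proof. destruct Hg as ([h [_ H]] & _); now exists (h v). Qed.

Lemma aut_neighbour u : (exists a, adj u a) -> exists a, adj (g u) a.
Proof. intros [a h]; exists (g a); now apply -> aut_adj. Qed.

Lemma aut_two_neighbours u : two_neighbours adj u -> two_neighbours adj (g u).
Proof.
  intros (a & b & n & ha & hb); exists (g a), (g b).
  split; [intro E; now apply n, aut_inj|split; now apply -> aut_adj].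
Qed.

Lemma aut_non_neighbour u : (exists a, Q a /\ ~ adj u a) -> exists a, Q a /\ ~ adj (g u) a.
Proof. intros [a [Qa h]]; exists (g a); split; [now apply -> aut_Q|now rewrite <- aut_adj]. Qed.

Lemma aut_two_non_neighbours u :
  two_non_neighbours adj Q u -> two_non_neighbours adj Q (g u).
Proof.
  intros (a & b & Qa & Qb & n & ha & hb); exists (g a), (g b).
  repeat split; try (now apply -> aut_Q);
    [intro E; now apply n, aut_inj|now rewrite <- aut_adj ..].
Qed.

End Automorphism.

Section PermutationExtension.
Context {T : Type} (adj : T -> T -> Prop) (P Q : T -> Prop).
Hypotheses (Hbip : is_bipartite adj P Q) (Hfin : finite_type T)
  (Hhom : partial_isos_extend adj P Q).

(* [P] is an independent set, so any injection of [P] into itself is a partial isomorphism. *)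
Lemma perm_extends (s : T -> T) :
  (forall u, P u -> P (s u)) -> (forall u v, P u -> P v -> s u = s v -> u = v) ->
  exists g, bip_automorphism adj P Q g /\ forall u, P u -> g u = s u.
Proof.
  intros HsP Hsi; destruct Hfin as [l Hl].
  set (S := filter (fun z => if dec (P z) then true else false) l).
  assert (HS : forall z, In z S <-> P z).
  { intro z; unfold S; rewrite filter_In.
    destruct (dec (P z)); split; intuition; discriminate. }
  destruct (Hhom S s) as [g [Hg Hgs]].
  - split; [|split].
    + intros u v iu iv; apply Hsi; now apply HS.
    + intros u v iu iv; apply HS in iu, iv.
      split; intro a; exfalso; [exact (bip_no_edge_P _ _ _ Hbip u v iu iv a)|].
      exact (bip_no_edge_P _ _ _ Hbip _ _ (HsP u iu) (HsP v iv) a).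
    + intros u iu; apply HS in iu.
      split; split; intro h; auto; exfalso.
      * exact (bip_disjoint _ _ _ Hbip u iu h).
      * exact (bip_disjoint _ _ _ Hbip _ (HsP u iu) h).
  - exists g; split; auto; intros u Pu; now apply Hgs, HS.
Qed.

Lemma perm_image_neighbourhood (s : T -> T) q :
  (forall u, P u -> P (s u)) -> (forall u v, P u -> P v -> s u = s v -> u = v) -> Q q ->
  exists q', Q q' /\ forall a, P a -> (adj (s a) q' <-> adj a q).
Proof.
  intros HsP Hsi Qq; destruct (perm_extends s HsP Hsi) as [g [Hg Hgs]].
  exists (g q); split; [now apply -> (aut_Q _ _ _ _ Hg)|].
  intros a Pa; rewrite <- (Hgs a Pa); symmetry; apply (aut_adj _ _ _ _ Hg).
Qed.

Lemma transitive_P u v : P u -> P v -> exists g, bip_automorphism adj P Q g /\ g u = v.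
Proof.
  intros Pu Pv; destruct (perm_extends (swap u v)) as [g [Hg E]].
  - intros; now apply swap_pred.
  - intros a b _ _; apply involutive_inj, swap_involutive.
  - exists g; split; auto; rewrite E; auto; apply swap_l.
Qed.

Lemma invariant_transfer_P (R : T -> Prop) :
  (forall g, bip_automorphism adj P Q g -> forall u, R u -> R (g u)) ->
  forall u v, P u -> P v -> R u -> R v.
Proof. intros HR u v Pu Pv Ru; destruct (transitive_P u v Pu Pv) as [g [Hg <-]]; auto. Qed.

End PermutationExtension.

Section Twins.
Context {T : Type} (adj : T -> T -> Prop) (P Q : T -> Prop).
Hypotheses (Hbip : is_bipartite adj P Q) (Hfin : finite_type T)
  (Hhom : partial_isos_extend adj P Q).

(* Twins [q1], [q2] in [Q]: transposing [q2] with any [q] while fixing [q1] shows that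
   all of [Q] shares the neighbourhood of [q1]. *)
Lemma twin_free_of_nontrivial :
  ~ null_bipartite adj -> ~ complete_bipartite adj P Q -> twin_free adj Q P.
Proof.
  intros Hn Hc q1 q2 Q1 Q2 Htw; apply NNPP; intro n12.
  assert (Hsame : forall q, Q q -> forall a, P a -> (adj a q <-> adj a q1)).
  { intros q Qq a Pa; destruct (classic (q = q1)) as [->|nq]; [tauto|].
    destruct (perm_extends adj Q P (is_bipartite_swap _ _ _ Hbip) Hfin
                (partial_isos_extend_swap _ _ _ Hhom) (swap q2 q)) as [g [Hg Hgs]].
    - intros; now apply swap_pred.
    - intros u v _ _; apply involutive_inj, swap_involutive.
    - apply bip_automorphism_swap in Hg.
      assert (gq2 : g q2 = q) by (rewrite Hgs; auto; apply swap_l).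
      assert (gq1 : g q1 = q1) by (rewrite Hgs; auto; apply swap_other; congruence).
      destruct (aut_surj _ _ _ _ Hg a) as [b <-].
      assert (Pb : P b) by now apply <- (aut_P _ _ _ _ Hg).
      rewrite <- gq2, <- gq1, <- !(aut_adj _ _ _ _ Hg).
      split; intro h; apply (bip_sym _ _ _ Hbip), Htw, (bip_sym _ _ _ Hbip); auto. }
  destruct (classic (exists a0, P a0 /\ adj a0 q1)) as [[a0 [Pa0 Ha0]]|Hnone].
  - apply Hc; intros u v Pu Qv.
    destruct (transitive_P adj P Q Hbip Hfin Hhom a0 u Pa0 Pu) as [g [Hg <-]].
    assert (Qg : Q (g q1)) by now apply -> (aut_Q _ _ _ _ Hg).
    assert (Pg : P (g a0)) by now apply -> (aut_P _ _ _ _ Hg).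
    apply (Hsame v Qv (g a0) Pg), (Hsame (g q1) Qg (g a0) Pg).
    now apply -> (aut_adj _ _ _ _ Hg).
  - apply Hn; intros u v a.
    destruct (bip_cover _ _ _ Hbip u) as [Pu|Qu].
    + pose proof (bip_adj_P _ _ _ Hbip u v Pu a) as Qv.
      apply Hnone; exists u; split; auto; now apply (Hsame v Qv u Pu).
    + pose proof (bip_adj_Q _ _ _ Hbip u v Qu a) as Pv.
      apply Hnone; exists v; split; auto.
      apply (Hsame u Qu v Pv), (bip_sym _ _ _ Hbip), a.
Qed.

End Twins.

Section Relabel.
Context {T : Type} (N : T -> Prop) (p1 r1 : T).
Hypotheses (Np1 : N p1) (Nr1 : ~ N r1).

(* [N] is the neighbourhood of a vertex; [relabel p] moves it to [N - p1 + p] when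
   [p] is outside [N], to [N - p + r1] when [p <> p1] is inside [N], and fixes it for [p1]. *)
Definition relabel (p : T) : T -> T :=
  if dec (N p) then (if dec (p = p1) then fun z => z else swap p r1) else swap p1 p.

Lemma relabel_involutive p z : relabel p (relabel p z) = z.
Proof.
  unfold relabel; destruct (dec (N p)); [destruct (dec (p = p1))|];
    auto; apply swap_involutive.
Qed.

Lemma relabel_pred (R : T -> Prop) p z : R p1 -> R r1 -> R p -> R z -> R (relabel p z).
Proof.
  intros; unfold relabel; destruct (dec (N p)); [destruct (dec (p = p1))|];
    auto; now apply swap_pred.
Qed.

Lemma relabel_fix p a : a <> p -> a <> p1 -> a <> r1 -> relabel p a = a.
Proof.
  intros; unfold relabel; destruct (dec (N p)); [destruct (dec (p = p1))|];
    auto; now apply swap_other.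
Qed.

Lemma relabel_p1 p : N (relabel p p1) <-> N p.
Proof.
  unfold relabel; destruct (dec (N p)) as [Np|Np]; [destruct (dec (p = p1)) as [->|n]|].
  - tauto.
  - rewrite swap_other; [tauto|congruence|intros ->; contradiction].
  - rewrite swap_l; tauto.
Qed.

Lemma relabel_in p a : N p -> N a -> a <> p -> N (relabel p a).
Proof.
  intros Np Na nap; destruct (dec (a = p1)) as [->|n1].
  - now apply relabel_p1.
  - rewrite relabel_fix; auto; intros ->; contradiction.
Qed.

Lemma relabel_self_in p : N p -> N (relabel p p) -> p = p1.
Proof.
  unfold relabel; destruct (dec (N p)); [|tauto].
  destruct (dec (p = p1)); auto; rewrite swap_l; tauto.
Qed.

Lemma relabel_self_out p : ~ N p -> N (relabel p p).
Proof. unfold relabel; destruct (dec (N p)); [tauto|]; now rewrite swap_r. Qed.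

Lemma relabel_out p a : ~ N p -> a <> p -> N (relabel p a) -> N a.
Proof.
  unfold relabel; destruct (dec (N p)); [tauto|]; intros _ nap.
  destruct (dec (a = p1)) as [->|n1]; auto; now rewrite swap_other.
Qed.

Lemma relabel_inj (R : T -> Prop) p p' : R p -> R p' -> R p1 ->
  (forall a, R a -> (N (relabel p a) <-> N (relabel p' a))) -> p = p'.
Proof.
  intros Rp Rp' R1 H; apply NNPP; intro n.
  assert (Hside : N p <-> N p')
    by (rewrite <- (relabel_p1 p), <- (relabel_p1 p'); exact (H p1 R1)).
  destruct (classic (N p)) as [Np|Np].
  - assert (Np' : N p') by tauto.
    assert (e : p = p1).
    { apply relabel_self_in; auto; apply (H p Rp), relabel_in; auto. }
    assert (e' : p' = p1).
    { apply relabel_self_in; auto; apply (H p' Rp'), relabel_in; auto. }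
    congruence.
  - apply Np, (relabel_out p' p); [tauto|auto|].
    apply (H p Rp), relabel_self_out; auto.
Qed.

End Relabel.

Section NeighbourhoodInjection.
Context {T : Type} (adj : T -> T -> Prop) (P Q : T -> Prop).
Hypotheses (Hbip : is_bipartite adj P Q) (Hfin : finite_type T)
  (Hhom : partial_isos_extend adj P Q).

(* The [|P|] relabellings of the neighbourhood of [q0] are realised by distinct vertices of [Q]
   (relabellings are involutions of [P]), none of which misses both [p1] and [p2]; the image
   of [q0] under [(p1 r1)(p2 r2)] does. *)
Lemma neighbourhood_injection q0 p1 p2 r1 r2 :
  Q q0 -> P p1 -> P p2 -> P r1 -> P r2 -> p1 <> p2 -> r1 <> r2 ->
  adj p1 q0 -> adj p2 q0 -> ~ adj r1 q0 -> ~ adj r2 q0 ->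
  exists F : T -> T, (forall p, P p -> Q (F p)) /\
    (forall p p', P p -> P p' -> F p = F p' -> p = p') /\
    exists qs, Q qs /\ forall p, P p -> F p <> qs.
Proof.
  intros Q0 P1 P2 R1 R2 n12 nr12 a1 a2 b1 b2.
  set (N := fun a => adj a q0).
  set (image := fun p q => Q q /\ forall a, P a -> (adj a q <-> N (relabel N p1 r1 p a))).
  assert (Himage : forall p, P p -> exists q, image p q).
  { intros p Pp.
    destruct (perm_image_neighbourhood adj P Q Hbip Hfin Hhom (relabel N p1 r1 p) q0)
      as [q [Qq Hq]]; auto.
    - intros; now apply relabel_pred.
    - intros u v _ _; apply involutive_inj, relabel_involutive.
    - exists q; split; auto; intros a Pa.
      rewrite <- (relabel_involutive N p1 r1 p a) at 1.
      now apply Hq, relabel_pred. }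
  set (F := fun p => epsilon (inhabits q0) (image p)).
  assert (HF : forall p, P p -> image p (F p)) by (intros; now apply epsilon_spec, Himage).
  set (ss := fun z => swap p1 r1 (swap p2 r2 z)).
  assert (ss1 : ss r1 = p1).
  { unfold ss; cbv beta; rewrite (swap_other p2 r2 r1); [apply swap_r| |auto].
    intros ->; contradiction. }
  assert (ss2 : ss r2 = p2).
  { unfold ss; cbv beta; rewrite swap_r; apply swap_other; [auto|intros ->; contradiction]. }
  destruct (perm_image_neighbourhood adj P Q Hbip Hfin Hhom ss q0) as [qs [Qqs Hqs]]; auto.
  { intros u Pu; unfold ss; apply swap_pred; auto; now apply swap_pred. }
  { intros u v _ _ E; now apply (involutive_inj _ (swap_involutive p2 r2)),
      (involutive_inj _ (swap_involutive p1 r1)). }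
  exists F; split; [|split].
  - intros p Pp; apply HF, Pp.
  - intros p p' Pp Pp' E; apply (relabel_inj N p1 r1 a1 b1 P); auto.
    intros a Pa; rewrite <- (proj2 (HF p Pp) a Pa), <- (proj2 (HF p' Pp') a Pa), E.
    reflexivity.
  - exists qs; split; auto; intros p Pp E.
    assert (n1 : ~ adj p1 qs) by (rewrite <- ss1, Hqs; auto).
    assert (n2 : ~ adj p2 qs) by (rewrite <- ss2, Hqs; auto).
    rewrite <- E in n1, n2; destruct (classic (p = p2)) as [->|np].
    + apply n1, (proj2 (HF p2 P2) p1 P1), relabel_p1; auto.
    + apply n2, (proj2 (HF p Pp) p2 P2); unfold N.
      rewrite relabel_fix; auto; intros ->; contradiction.
Qed.

End NeighbourhoodInjection.

Section Classification.
Context {T : Type} (adj : T -> T -> Prop) (P Q : T -> Prop).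
Hypotheses (Hbip : is_bipartite adj P Q) (Hfin : finite_type T)
  (Hhom : partial_isos_extend adj P Q).

Let Hbip' := is_bipartite_swap _ _ _ Hbip.
Let Hhom' := partial_isos_extend_swap _ _ _ Hhom.
Let Hsym := bip_sym _ _ _ Hbip.
Let transfer_P := invariant_transfer_P adj P Q Hbip Hfin Hhom.
Let transfer_Q := invariant_transfer_P adj Q P Hbip' Hfin Hhom'.

Lemma spread_vertices_impossible p q : P p -> Q q ->
  two_neighbours adj p -> two_non_neighbours adj Q p ->
  two_neighbours adj q -> two_non_neighbours adj P q -> False.
Proof.
  intros Pp Qq (q1 & q2 & nq & aq1 & aq2) (s1 & s2 & Qs1 & Qs2 & ns & bs1 & bs2)
    (p1 & p2 & np & ap1 & ap2) (r1 & r2 & Pr1 & Pr2 & nr & br1 & br2).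
  destruct (neighbourhood_injection adj Q P Hbip' Hfin Hhom' p q1 q2 s1 s2)
    as (F & FP & Finj & ps & Pps & Fmiss); auto;
    try (now apply (bip_adj_P _ _ _ Hbip p));
    try (intro h; apply Hsym in h; contradiction).
  destruct (neighbourhood_injection adj P Q Hbip Hfin Hhom q p1 p2 r1 r2)
    as (G & GQ & Ginj & _); auto;
    try (now apply (bip_adj_Q _ _ _ Hbip q));
    try (intro h; apply Hsym in h; contradiction).
  destruct (finite_inj_surj P (fun p => F (G p)) Hfin) with (q := ps) as [p' [Pp' E]]; auto.
  exact (Fmiss (G p') (GQ p' Pp') E).
Qed.

Lemma no_spread_P_vertex p q : twin_free adj Q P -> P p -> Q q ->
  two_neighbours adj p -> two_non_neighbours adj Q p -> False.
Proof.
  intros tw Pp Qq Hp2 Hp2'.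
  destruct (classic (two_neighbours adj q)) as [Hq2|Hq2].
  2:{ destruct Hp2 as (q1 & q2 & n12 & a1 & a2).
      assert (no2 : forall q', Q q' -> ~ two_neighbours adj q')
        by (intros q' Qq' H; apply Hq2, (transfer_Q _ (aut_two_neighbours adj Q P) q'); auto).
      apply n12, tw; try (now apply (bip_adj_P _ _ _ Hbip p)); intros a _.
      apply (twins_of_unique_neighbour adj p); auto;
        apply no2; now apply (bip_adj_P _ _ _ Hbip p). }
  destruct (classic (two_non_neighbours adj P q)) as [Hq2'|Hq2'].
  2:{ destruct Hp2' as (r1 & r2 & Qr1 & Qr2 & n12 & b1 & b2).
      assert (no2 : forall q', Q q' -> ~ two_non_neighbours adj P q')
        by (intros q' Qq' H; apply Hq2', (transfer_Q _ (aut_two_non_neighbours adj Q P) q'); auto).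
      apply n12, tw; auto.
      apply (twins_of_unique_non_neighbour adj P p); auto;
        intro h; apply Hsym in h; contradiction. }
  exact (spread_vertices_impossible p q Pp Qq Hp2 Hp2' Hq2 Hq2').
Qed.

Lemma every_vertex_has_neighbour : ~ null_bipartite adj -> forall u, exists v, adj u v.
Proof.
  intros Hn u; destruct (some_edge _ _ _ Hbip Hn) as (pe & qe & Ppe & Qqe & a).
  destruct (bip_cover _ _ _ Hbip u) as [Pu|Qu].
  - apply (transfer_P _ (aut_neighbour adj P Q) pe); eauto.
  - apply (transfer_Q _ (aut_neighbour adj Q P) qe); eauto.
Qed.

Lemma every_P_has_non_neighbour :
  ~ complete_bipartite adj P Q -> forall p, P p -> exists q, Q q /\ ~ adj p q.
Proof.
  intros Hc p Pp; destruct (some_non_edge _ _ _ Hc) as (pn & qn & Ppn & Qqn & n).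
  apply (transfer_P _ (aut_non_neighbour adj P Q) pn); eauto.
Qed.

Lemma every_Q_has_non_neighbour :
  ~ complete_bipartite adj P Q -> forall q, Q q -> exists p, P p /\ ~ adj q p.
Proof.
  intros Hc q Qq; destruct (some_non_edge _ _ _ Hc) as (pn & qn & Ppn & Qqn & n).
  apply (transfer_Q _ (aut_non_neighbour adj Q P) qn); auto.
  exists pn; split; auto; intro h; now apply n, Hsym.
Qed.

Theorem finite_homogeneous_bipartite_classification :
  null_bipartite adj \/ complete_bipartite adj P Q \/
  compl_perfect_matching adj P Q \/ perfect_matching adj P Q.
Proof.
  destruct (classic (null_bipartite adj)) as [|Hn]; [now left|].
  destruct (classic (complete_bipartite adj P Q)) as [|Hc]; [now right; left|].
  right; right.
  assert (twQ : twin_free adj Q P) by now apply twin_free_of_nontrivial.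
  assert (twP : twin_free adj P Q).
  { apply (twin_free_of_nontrivial adj Q P); auto.
    intro Hc'; apply Hc; intros u v Pu Qv; apply Hsym, Hc'; auto. }
  destruct (some_edge _ _ _ Hbip Hn) as (pe & qe & Ppe & Qqe & _).
  destruct (classic (two_neighbours adj pe)) as [H2|H2].
  2:{ right; apply perfect_matching_of_unique_neighbours; auto.
      - intros p _; now apply every_vertex_has_neighbour.
      - intros p Pp Hp; apply H2.
        now apply (transfer_P _ (aut_two_neighbours adj P Q) p).
      - intros q _; now apply every_vertex_has_neighbour. }
  destruct (classic (two_non_neighbours adj Q pe)) as [H2'|H2'].
  2:{ left; apply compl_perfect_matching_of_unique_non_neighbours; auto.
      - now apply every_P_has_non_neighbour.
      - intros p Pp Hp; apply H2'.
        now apply (transfer_P _ (aut_two_non_neighbours adj P Q) p).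
      - now apply every_Q_has_non_neighbour. }
  exfalso; exact (no_spread_P_vertex pe qe twQ Ppe Qqe H2 H2').
Qed.

End Classification.

Section Link.
Context {V : Type} (adj : V -> V -> Prop) (X Y : V -> Prop).
Hypothesis Hbip : is_bipartite adj X Y.
Hypothesis Hext : forall S f, connected_in adj S -> connected_in adj (map f S) ->
  bip_partial_iso adj X Y S f -> extends_to_aut adj X Y S f.
Variables (x y : V).
Hypotheses (Hx : X x) (Hy : Y y) (Hxy : adj x y).

Let A := fun v => adj x v /\ v <> y.
Let B := fun v => adj y v /\ v <> x.
Let W := fun v => A v \/ B v.

Lemma W_not_x : ~ W x.
Proof. intros [[a _]|[_ n]]; [exact (bip_irrefl _ _ _ Hbip x a)|now apply n]. Qed.

Lemma W_not_y : ~ W y.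
Proof. intros [[_ n]|[a _]]; [now apply n|exact (bip_irrefl _ _ _ Hbip y a)]. Qed.

Lemma A_Y v : A v -> Y v.
Proof. intros [a _]; exact (bip_adj_P _ _ _ Hbip x v Hx a). Qed.

Lemma B_X v : B v -> X v.
Proof. intros [a _]; exact (bip_adj_Q _ _ _ Hbip y v Hy a). Qed.

Lemma W_X v : W v -> (X v <-> B v).
Proof.
  intros [a|b]; split; intro h; auto.
  - exfalso; exact (bip_disjoint _ _ _ Hbip v h (A_Y v a)).
  - exfalso; exact (bip_disjoint _ _ _ Hbip v (B_X v h) (A_Y v a)).
  - now apply B_X.
Qed.

Lemma W_Y v : W v -> (Y v <-> A v).
Proof.
  intros [a|b]; split; intro h; auto.
  - now apply A_Y.
  - exfalso; exact (bip_disjoint _ _ _ Hbip v (B_X v b) h).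
  - exfalso; exact (bip_disjoint _ _ _ Hbip v (B_X v b) (A_Y v h)).
Qed.

Lemma W_adj_x v : W v -> (adj x v <-> A v).
Proof. intros w; split; [intros a; split; auto; intros ->; now apply W_not_y|now intros []]. Qed.

Lemma W_adj_y v : W v -> (adj y v <-> B v).
Proof. intros w; split; [intros a; split; auto; intros ->; now apply W_not_x|now intros []]. Qed.

Lemma link_bipartite : is_bipartite (induced adj W) (lift_pred W A) (lift_pred W B).
Proof.
  unfold induced, lift_pred; split; [|split; [|split; [|split]]].
  - intros u v; apply (bip_sym _ _ _ Hbip).
  - intro u; apply (bip_irrefl _ _ _ Hbip).
  - intros [u w]; exact w.
  - intros [u w] [a b]; exact (bip_disjoint _ _ _ Hbip u (B_X u b) (A_Y u a)).
  - intros [u [au|bu]] [v [av|bv]] a; simpl in *; auto; exfalso.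
    + exact (bip_disjoint _ _ _ Hbip v (bip_adj_Q _ _ _ Hbip u v (A_Y u au) a) (A_Y v av)).
    + exact (bip_disjoint _ _ _ Hbip v (B_X v bv) (bip_adj_P _ _ _ Hbip u v (B_X u bu) a)).
Qed.

Lemma link_finite : locally_finite adj -> finite_type {v | W v}.
Proof.
  intros Hlf; destruct (Hlf x) as [lx Hlx], (Hlf y) as [ly Hly].
  apply (finite_sig W (lx ++ ly)); intros v [[a _]|[a _]]; apply in_or_app; auto.
Qed.

Lemma star_connected L : (forall v, In v L -> W v) -> connected_in adj (x :: y :: L).
Proof.
  intros HL; set (S := x :: y :: L); set (R := fun a b => adj a b /\ In a S /\ In b S).
  assert (ix : In x S) by (left; auto).
  assert (iy : In y S) by (right; left; auto).
  assert (step : forall u v, In u S -> In v S -> adj u v ->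
                 clos_refl_trans V R u v /\ clos_refl_trans V R v u).
  { intros u v iu iv a; split; apply rt_step; repeat split; auto.
    now apply (bip_sym _ _ _ Hbip). }
  assert (to_x : forall u, In u S -> clos_refl_trans V R x u /\ clos_refl_trans V R u x).
  { intros u iu; destruct iu as [<-|[<-|iu]].
    - split; apply rt_refl.
    - now apply step.
    - assert (iu' : In u S) by (right; right; auto).
      destruct (HL u iu) as [[a _]|[a _]]; [now apply step|].
      destruct (step x y ix iy Hxy), (step y u iy iu' a).
      split; eapply rt_trans; eauto. }
  intros u v iu iv; apply rt_trans with x; apply to_x; auto.
Qed.

Lemma in_star (S : list {v | W v}) u :
  In u (x :: y :: map (@proj1_sig _ _) S) ->
  u = x \/ u = y \/ exists s, In s S /\ u = proj1_sig s.
Proof. intros [<-|[<-|iu]]; auto; apply in_map_iff in iu as [s [<- is]]; eauto. Qed.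

Lemma lift_partial_iso S f :
  bip_partial_iso (induced adj W) (lift_pred W A) (lift_pred W B) S f ->
  bip_partial_iso adj X Y (x :: y :: map (@proj1_sig _ _) S) (sig_extend W f).
Proof.
  unfold induced, lift_pred; intros (Fi & Fa & Fs).
  assert (fx : sig_extend W f x = x) by (apply sig_extend_out, W_not_x).
  assert (fy : sig_extend W f y = y) by (apply sig_extend_out, W_not_y).
  assert (Ws : forall s : {v | W v}, W (proj1_sig s)) by (intro s; exact (proj2_sig s)).
  assert (ax : forall s, In s S -> (adj x (proj1_sig s) <-> adj x (proj1_sig (f s)))).
  { intros s is; rewrite (W_adj_x _ (Ws s)), (W_adj_x _ (Ws (f s))); apply (Fs s is). }
  assert (ay : forall s, In s S -> (adj y (proj1_sig s) <-> adj y (proj1_sig (f s)))).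
  { intros s is; rewrite (W_adj_y _ (Ws s)), (W_adj_y _ (Ws (f s))); apply (Fs s is). }
  assert (sym : forall u v, adj u v <-> adj v u) by (split; apply (bip_sym _ _ _ Hbip)).
  split; [|split]; intros u; [intros v|intros v|];
    intros iu; destruct (in_star S u iu) as [->|[->|[s [is ->]]]];
    try (intros iv; destruct (in_star S v iv) as [->|[->|[t [it ->]]]]);
    rewrite ?fx, ?fy, ?sig_extend_val; try tauto.
  - intros E; exfalso; apply W_not_x; rewrite E; apply Ws.
  - intros E; exfalso; apply W_not_y; rewrite E; apply Ws.
  - intros E; exfalso; apply W_not_x; rewrite <- E; apply Ws.
  - intros E; exfalso; apply W_not_y; rewrite <- E; apply Ws.
  - intros E; f_equal; apply Fi; auto; now apply sig_eq.
  - now apply ax.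
  - now apply ay.
  - rewrite sym, (sym _ x); now apply ax.
  - rewrite sym, (sym _ y); now apply ay.
  - now apply Fa.
  - rewrite (W_X _ (Ws s)), (W_X _ (Ws (f s))), (W_Y _ (Ws s)), (W_Y _ (Ws (f s))).
    split; apply (Fs s is).
Qed.

Lemma aut_fixing_edge_restricts g :
  bip_automorphism adj X Y g -> g x = x -> g y = y ->
  exists g', bip_automorphism (induced adj W) (lift_pred W A) (lift_pred W B) g' /\
    forall s, proj1_sig (g' s) = g (proj1_sig s).
Proof.
  intros Hg gx gy.
  assert (GA : forall v, A v <-> A (g v)).
  { intro v; unfold A; rewrite (aut_adj _ _ _ _ Hg x v), gx.
    split; intros [a n]; split; auto; intro E.
    - apply n, (aut_inj _ _ _ _ Hg); congruence.
    - apply n; congruence. }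
  assert (GB : forall v, B v <-> B (g v)).
  { intro v; unfold B; rewrite (aut_adj _ _ _ _ Hg y v), gy.
    split; intros [a n]; split; auto; intro E.
    - apply n, (aut_inj _ _ _ _ Hg); congruence.
    - apply n; congruence. }
  assert (GW : forall v, W v <-> W (g v)) by (intro v; unfold W; rewrite (GA v), (GB v); tauto).
  destruct Hg as ([h [hg gh]] & Ga & Gs).
  assert (hW : forall v, W v -> W (h v)) by (intros v w; apply GW; now rewrite gh).
  exists (fun s => exist W (g (proj1_sig s)) (proj1 (GW _) (proj2_sig s))); split; auto.
  split; [|split].
  - exists (fun s => exist W (h (proj1_sig s)) (hW _ (proj2_sig s))).
    split; intro s; apply sig_eq; simpl; auto.
  - intros u v; apply Ga.
  - intro u; split; [apply GA|apply GB].
Qed.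

Lemma link_partial_isos_extend :
  partial_isos_extend (induced adj W) (lift_pred W A) (lift_pred W B).
Proof.
  intros S f Hf.
  assert (HL : forall v, In v (map (@proj1_sig _ _) S) -> W v)
    by (intros v iv; apply in_map_iff in iv as [s [<- _]]; exact (proj2_sig s)).
  assert (fx : sig_extend W f x = x) by (apply sig_extend_out, W_not_x).
  assert (fy : sig_extend W f y = y) by (apply sig_extend_out, W_not_y).
  destruct (Hext (x :: y :: map (@proj1_sig _ _) S) (sig_extend W f)) as [g [Hg Eg]].
  - now apply star_connected.
  - simpl; rewrite fx, fy; apply star_connected.
    intros v iv; apply in_map_iff in iv as [u [<- iu]].
    apply in_map_iff in iu as [s [<- _]]; rewrite sig_extend_val; exact (proj2_sig (f s)).
  - now apply lift_partial_iso.
  - destruct (aut_fixing_edge_restricts g Hg) as [g' [Hg' Eg']].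
    + rewrite Eg; [exact fx|now left].
    + rewrite Eg; [exact fy|now right; left].
    + exists g'; split; auto; intros s is; apply sig_eq.
      rewrite Eg', Eg, sig_extend_val; auto; right; right; now apply in_map.
Qed.

End Link.

Theorem lemma4p5 (V : Type) (adj : V -> V -> Prop) (X Y : V -> Prop)
  (Hconn : connected_graph adj)
  (Hch : conn_homogeneous_bipartite adj X Y)
  (Hlf : locally_finite adj)
  (x y : V) (Hx : X x) (Hy : Y y) (Hxy : adj x y) :
  let A := fun v => adj x v /\ v <> y in
  let B := fun v => adj y v /\ v <> x in
  let W := fun v => A v \/ B v in
  let Omega := induced adj W in
  finite_type {v : V | W v} /\
  homogeneous_bipartite Omega (lift_pred W A) (lift_pred W B) /\
  (null_bipartite Omega \/
   complete_bipartite Omega (lift_pred W A) (lift_pred W B) \/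
   compl_perfect_matching Omega (lift_pred W A) (lift_pred W B) \/
   perfect_matching Omega (lift_pred W A) (lift_pred W B)).
Proof.
  intros A B W Omega.
  destruct Hch as [Hbip Hext].
  pose proof (link_finite adj x y Hlf) as Hfin.
  pose proof (link_bipartite adj X Y Hbip x y Hx Hy) as HbipW.
  pose proof (link_partial_isos_extend adj X Y Hbip Hext x y Hx Hy Hxy) as HhomW.
  split; [exact Hfin|split; [split; [exact HbipW|exact HhomW]|]].
  exact (finite_homogeneous_bipartite_classification _ _ _ HbipW Hfin HhomW).
Qed.
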